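(* For every $0<r<1$ there is an open set $U\subseteq2^\omega$ which is dualistic and satisfies $\mu(U)=\mu(\operatorname{Cl}U)=r$; moreover $\operatorname{Cl}U$ is also dualistic.
   Context: $2^{\omega}$ is the Cantor space; $N_s=\{x\in2^\omega:s\subset x\}$; $\mu$ is the coin-tossing measure, $\mu(N_s)=2^{-\mathrm{lh}(s)}$. For measurable $A$, $\mathcal{D}_A(z)=\lim_n\mu(A\cap N_{z\restriction n})/\mu(N_{z\restriction n})$ when the limit exists. $A$ is dualistic if for every $z\in2^\omega$ the limit $\mathcal{D}_A(z)$ exists and belongs to $\{0,1\}$. *)

From HB Require Import structures.
From mathcomp Require Import all_boot all_order all_algebra.
From mathcomp Require Import all_classical all_reals all_analysis.
Set Implicit Arguments. Unset Strict Implicit. Unset Printing Implicit Defensive.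
Import Order.TTheory GRing.Theory Num.Theory.
Local Open Scope classical_set_scope.
Local Open Scope ring_scope.

Definition cyl (s : seq bool) : set cantor_space :=
  [set x | forall i, (i < size s)%N -> x i = nth false s i].

Definition prefix (z : cantor_space) (n : nat) : seq bool := mkseq z n.

(* On Borel sets (in particular open and closed ones) this is the
   coin-tossing measure with mu(N_s) = 2^-lh(s). *)
Definition mu (R : realType) (A : set cantor_space) : \bar R :=
  ereal_inf [set (\sum_(0 <= n <oo) ((2%:R : R) ^- size (c n))%:E)%E
            | c in [set c : nat -> seq bool | A `<=` \bigcup_n cyl (c n)]].

(* mu(A ∩ N_{z|n}) / mu(N_{z|n}) = mu(A ∩ N_{z|n}) * 2^n converges to l *)
Definition density_is (R : realType) (A : set cantor_space)
    (z : cantor_space) (l : R) : Prop :=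
  ((fun n : nat => (mu R (A `&` cyl (prefix z n)) * ((2%:R : R) ^+ n)%:E)%E)
     @ \oo --> l%:E).

Definition dualistic (R : realType) (A : set cantor_space) : Prop :=
  forall z : cantor_space, exists l : R, (l = 0 \/ l = 1) /\ density_is A z l.

From Pilot Require Import Defs.
From HB Require Import structures.
From mathcomp Require Import all_boot all_order all_algebra.
From mathcomp Require Import all_classical all_reals all_analysis.
From mathcomp Require Import lra ring zify.
Import Order.TTheory GRing.Theory Num.Theory.
Local Open Scope classical_set_scope.
Local Open Scope ring_scope.

(* Let e be the binary digits of r, so r = sum_(e_j = 1) 2^-(j+1), and fix L
   with e_L = 0.  To every digit e_j = 1 attach a cylinder of measure 2^-(j+1)
   that follows the point p = e_0 ... e_(L-1) 0 0 ... up to some position and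
   leaves p there: at position j if j < L, at about L + (j - L)/2 if j > L.
   These cylinders are pairwise disjoint, so their union U has measure r, and
   they accumulate only at p, so Cl U = U ∪ {p} has measure r as well.  Points
   of U have density 1, points outside U ∪ {p} have a cylinder neighbourhood
   missing U ∪ {p}, and the cylinders meeting N_{p|n} have total measure at
   most 2^(L-2n), so the density at p is 0. *)

Lemma big_ord_recr_cond (T : Type) (idx : T) (op : Monoid.law idx) N
    (P : pred nat) (F : nat -> T) :
  \big[op/idx]_(n < N.+1 | P n) F n
    = op (\big[op/idx]_(n < N | P n) F n) (if P N then F N else idx).
Proof. by rewrite big_mkcond big_ord_recr -big_mkcond. Qed.

Lemma cyl_nil : cyl [::] = setT.
Proof. by apply/seteqP; split=> // x _ []. Qed.

Lemma cyl_rcons s b : cyl (rcons s b) = cyl s `&` [set x | x (size s) = b].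
Proof.
apply/seteqP; split=> x; rewrite /cyl /= size_rcons.
  move=> xsb; split=> [i ilt|]; last by rewrite xsb // nth_rcons ltnn eqxx.
  by rewrite xsb ?nth_rcons ?ilt // ltnS ltnW.
move=> [xs xb] i; rewrite ltnS leq_eqVlt nth_rcons => /orP[/eqP->|ilt].
  by rewrite ltnn eqxx.
by rewrite ilt; exact: xs.
Qed.

Lemma cyl_mkseq (f : nat -> bool) n :
  cyl (mkseq f n) = [set x | forall i, (i < n)%N -> x i = f i].
Proof.
by apply/seteqP; split=> x; rewrite /cyl /= size_mkseq => xf i ilt;
  rewrite xf // nth_mkseq.
Qed.

Lemma cyl_prefix (z : cantor_space) n : cyl (Defs.prefix z n) z.
Proof. by rewrite /Defs.prefix cyl_mkseq. Qed.

Lemma cyl_prefix_sub (z : cantor_space) s n :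
  cyl s z -> (size s <= n)%N -> cyl (Defs.prefix z n) `<=` cyl s.
Proof.
move=> zs sn y; rewrite /Defs.prefix cyl_mkseq => yz i ilt.
by rewrite yz ?zs // (leq_trans ilt sn).
Qed.

Lemma cyl_disjoint s t i : (i < size s)%N -> (i < size t)%N ->
  nth false s i != nth false t i -> cyl s `&` cyl t = set0.
Proof.
move=> si ti st; apply/seteqP; split=> // x [xs xt].
by move: st; rewrite -(xs i si) -(xt i ti) eqxx.
Qed.

Lemma coord_clopen i b : clopen [set x : cantor_space | x i = b].
Proof.
have -> : [set x : cantor_space | x i = b] = proj i @^-1` [set b] by [].
split; [apply: open_comp | apply: preimage_closed];
  by [move=> x _; exact: proj_continuous | exact: discrete_open
     | exact: discrete_closed].
Qed.

Lemma cyl_clopen s : clopen (cyl s).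
Proof.
elim/last_ind: s => [|s b IH]; first by rewrite cyl_nil; exact: clopenT.
by rewrite cyl_rcons; apply: clopenI => //; exact: coord_clopen.
Qed.

Definition ccons (b : bool) (x : cantor_space) : cantor_space :=
  fun n => if n is n'.+1 then x n' else b.

Lemma ccons_preimage_cyl b b' s :
  ccons b' @^-1` cyl (b :: s) = if b == b' then cyl s else set0.
Proof.
apply/seteqP; split=> x /=.
  move=> xbs; have /= <- := xbs 0%N isT; rewrite eqxx => i ilt.
  exact: (xbs i.+1).
case: eqP => [<- xs [|i] //= ilt|//]; exact: xs.
Qed.

Section level_mass.
Variable R : realType.

(* The proportion of the words w of length k such that w 0^omega lies in A;
   it is finitely additive, and agrees with mu on cylinders of length <= k. *)
Fixpoint level_mass (k : nat) (A : set cantor_space) : R :=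
  if k is k'.+1 then
    (level_mass k' (ccons false @^-1` A)
     + level_mass k' (ccons true @^-1` A)) / 2
  else (((fun=> false) : cantor_space) \in A)%:R.

Lemma level_mass_ge0 k A : 0 <= level_mass k A.
Proof. by elim: k A => [|k IH] A //=; rewrite divr_ge0 ?addr_ge0. Qed.

Lemma level_mass0 k : level_mass k set0 = 0.
Proof.
by elim: k => [|k IH] /=; rewrite ?in_set0 // !preimage_set0 IH addr0 mul0r.
Qed.

Lemma level_mass_le k (A B : set cantor_space) :
  A `<=` B -> level_mass k A <= level_mass k B.
Proof.
elim: k A B => [|k IH] A B AB /=.
  by case: (boolP (_ \in A)) => // /set_mem/AB/mem_set ->.
by rewrite ler_pM2r // lerD // IH //; exact: preimage_subset.
Qed.

Lemma level_massUI k (A B : set cantor_space) :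
  level_mass k (A `|` B) + level_mass k (A `&` B)
    = level_mass k A + level_mass k B.
Proof.
elim: k A B => [|k IH] A B /=.
  by rewrite in_setU in_setI; case: (_ \in A); case: (_ \in B);
    rewrite ?addr0 ?add0r.
by rewrite !preimage_setU !preimage_setI -!mulrDl addrACA !IH addrACA.
Qed.

Lemma level_massT k : level_mass k setT = 1.
Proof.
elim: k => [|k IH] /=; first by rewrite in_setT.
by rewrite !preimage_setT IH -mulr2n -mulr_natr mul1r divff.
Qed.

Lemma level_mass_cyl k s : (size s <= k)%N ->
  level_mass k (cyl s) = 2 ^- size s.
Proof.
elim: k s => [|k IH] [|b s] //; rewrite ?cyl_nil ?level_massT ?expr0 ?invr1 //=.
rewrite ltnS => sk; rewrite !ccons_preimage_cyl exprS invfM mulrC.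
by case: b; rewrite /= level_mass0 IH // ?add0r ?addr0.
Qed.

Lemma level_mass_setU_le k (A B : set cantor_space) :
  level_mass k (A `|` B) <= level_mass k A + level_mass k B.
Proof. by rewrite -level_massUI lerDl level_mass_ge0. Qed.

Lemma level_mass_bigsetU_le k N (P : pred nat) (A : nat -> set cantor_space) :
  level_mass k (\big[setU/set0]_(n < N | P n) A n)
    <= \sum_(n < N | P n) level_mass k (A n).
Proof.
apply: (big_ind2 (fun B x => level_mass k B <= x)) => //.
  by rewrite level_mass0.
move=> B x C y Bx Cy; apply: le_trans (level_mass_setU_le _ _ _) _.
exact: lerD.
Qed.

Lemma level_mass_bigsetU k N (P : pred nat) (A : nat -> set cantor_space) :
  trivIset [set n | P n] A ->
  level_mass k (\big[setU/set0]_(n < N | P n) A n)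
    = \sum_(n < N | P n) level_mass k (A n).
Proof.
move=> tA; elim: N => [|N IH]; first by rewrite !big_ord0 level_mass0.
rewrite big_ord_recr_cond (@big_ord_recr_cond _ 0 _ N P (level_mass k \o A)) /=.
case: ifP => PN; rewrite ?setU0 ?addr0 // -IH.
by rewrite -level_massUI (trivIset_bigsetUI tA) // level_mass0 addr0.
Qed.

End level_mass.

Lemma exp2V_lt {R : realType} (e : R) : 0 < e -> exists M : nat, 2 ^- M < e.
Proof.
move=> e0.
have [M _ /(_ M (leqnn M))] := near_infty_natSinv_expn_lt (PosNum e0).
by rewrite div1r; exists M.
Qed.

Lemma sum_exp2V (R : realType) M K :
  \sum_(n < K) 2 ^- (n + M).+1 = 2 ^- M - 2 ^- (K + M) :> R.
Proof.
elim: K => [|K IH]; first by rewrite big_ord0 add0n subrr.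
rewrite big_ord_recr /= IH addSn exprS invfM; set a := (2 ^+ (K + M))^-1.
lra.
Qed.

Lemma exp2_ratio_le (R : realType) a b c d : (a + b <= c + d)%N ->
  2 ^+ a / 2 ^+ c <= 2 ^+ d / 2 ^+ b :> R.
Proof.
move=> abcd; rewrite ler_pdivrMr ?exprn_gt0 // mulrAC ler_pdivlMr ?exprn_gt0 //.
by rewrite -!exprD ler_eXn2l ?ltr1n // [(d + c)%N]addnC.
Qed.

Section outer_measure.
Variable R : realType.

Lemma mu_ge0 A : (0 <= mu R A)%E.
Proof.
apply: le_ereal_inf_tmp => _ [c _ <-].
by apply: nneseries_ge0 => n _ _; rewrite lee_fin invr_ge0 exprn_ge0.
Qed.

Lemma mu_le_cover (A : set cantor_space) p (P : pred nat) (s : nat -> seq bool)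
    (x : R) :
  A `<=` [set p] `|` \bigcup_(n in [set n | P n]) cyl (s n) ->
  (forall N, \sum_(n < N | P n) 2 ^- size (s n) <= x) -> (mu R A <= x%:E)%E.
Proof.
move=> Acover sx; apply/lee_addgt0Pr => e e0.
have [M Me] : exists M : nat, 2 ^- M < e / 2.
  by apply: exp2V_lt; rewrite divr_gt0.
(* [p] is covered by its prefix of length M, and the unused indices by
   cylinders of measure 2^-(n+M+1), which add up to at most 2^-M *)
pose c n := if n is n'.+1 then (if P n' then s n' else nseq (n' + M).+1 false)
            else Defs.prefix p M.
apply: ge_ereal_inf; exists (\sum_(0 <= n <oo) (2 ^- size (c n))%:E)%E.
  exists c => // y /Acover [->|[n Pn sny]].
    by exists 0%N => //; exact: cyl_prefix.
  by exists n.+1 => //=; rewrite /c Pn.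
apply: lime_le.
  by apply: is_cvg_nneseries => n _ _; rewrite lee_fin invr_ge0 exprn_ge0.
have x0 : 0 <= x by have := sx 0%N; rewrite big_ord0.
apply: nearW => -[|K]; rewrite sumEFin lee_fin.
  by rewrite big_geq // addr_ge0 // ltW.
have c0 : size (c 0%N) = M by rewrite size_mkseq.
rewrite big_nat_recl // big_mkord c0.
have cK : \sum_(i < K) 2 ^- size (c i.+1)
    <= \sum_(i < K | P i) 2 ^- size (s i) + \sum_(i < K) 2 ^- (i + M).+1 :> R.
  rewrite [X in _ <= X + _]big_mkcond -big_split ler_sum // => i _ /=.
  case: (P i); rewrite /= ?size_nseq ?add0r // -[X in X <= _]addr0 lerD2l.
  by rewrite invr_ge0 exprn_ge0.
rewrite sum_exp2V in cK; have := sx K.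
have : 0 <= 2 ^- (K + M) :> R by rewrite invr_ge0 exprn_ge0.
lra.
Qed.

Lemma compact_cyl_cover (K : set cantor_space) (c : nat -> seq bool) :
  compact K -> K `<=` \bigcup_i cyl (c i) ->
  exists N, K `<=` \big[setU/set0]_(i < N) cyl (c i).
Proof.
rewrite compact_cover => Kcompact Kc.
have [i _|D _ KD] := Kcompact nat setT (cyl \o c) _ Kc.
  exact: (cyl_clopen _).1.
exists (\max_(i <- finmap.enum_fset D) i).+1 => x /KD [i Di ci].
rewrite -(bigcup_mkord _ (cyl \o c)); exists i => //=.
by rewrite ltnS; apply: leq_bigmax_seq.
Qed.

(* By compactness the cover has a finite subcover; at a fine enough level,
   level_mass is additive on the disjoint cylinders and subadditive on the
   subcover. *)
Lemma mu_ge_sum (A : set cantor_space) (P : pred nat) (s : nat -> seq bool) N :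
  trivIset [set n | P n] (cyl \o s) -> (forall n, P n -> cyl (s n) `<=` A) ->
  ((\sum_(n < N | P n) 2 ^- size (s n))%:E <= mu R A)%E.
Proof.
move=> ts sA; apply: le_ereal_inf_tmp => _ [c Ac <-].
set K := \big[setU/set0]_(n < N | P n) cyl (s n).
have KA : K `<=` A.
  apply: (big_ind (fun B => B `<=` A)) => // [B C BA CA x|n /sA //].
  by case=> [/BA|/CA].
have Kcompact : compact K.
  apply: (subclosed_compact _ cantor_space_compact) => //.
  apply: (big_ind closed) => [|B C|n _];
    [exact: closed0 | exact: closedU | exact: (cyl_clopen _).2].
have [N' KN'] : exists N', K `<=` \big[setU/set0]_(i < N') cyl (c i).
  by apply: compact_cyl_cover => // x /KA /Ac.
set k := (\max_(n < N) size (s n) + \max_(i < N') size (c i))%N.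
have sk (n : 'I_N) : (size (s n) <= k)%N.
  apply: leq_trans (leq_addr _ _).
  exact: (@leq_bigmax _ (fun n : 'I_N => size (s n))).
have ck (i : 'I_N') : (size (c i) <= k)%N.
  apply: leq_trans (leq_addl _ _).
  exact: (@leq_bigmax _ (fun i : 'I_N' => size (c i))).
have sum_level_mass : \sum_(n < N | P n) 2 ^- size (s n) = level_mass R k K.
  rewrite /K (@level_mass_bigsetU R k N P (cyl \o s)) //.
  by apply: eq_bigr => n _; rewrite /= level_mass_cyl.
apply: (@le_trans _ _ (\sum_(0 <= i < N') (2 ^- size (c i))%:E)%E); last first.
  by apply: nneseries_lim_ge => n _ _; rewrite lee_fin invr_ge0 exprn_ge0.
rewrite sumEFin lee_fin big_mkord sum_level_mass.
apply: le_trans (@level_mass_le R k _ _ KN') _.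
apply: le_trans (level_mass_bigsetU_le R k N' xpredT (cyl \o c)) _.
by apply: ler_sum => i _; rewrite /= level_mass_cyl.
Qed.

Lemma mu_cyl s : mu R (cyl s) = (2 ^- size s)%:E.
Proof.
apply/le_anti/andP; split.
  apply: (@mu_le_cover _ (fun=> false) (pred1 0%N) (fun=> s)).
    by move=> x sx; right; exists 0%N.
  case=> [|N]; first by rewrite big_ord0 invr_ge0 exprn_ge0.
  by rewrite big_mkcond big_ord_recl /= big1 ?addr0.
have := @mu_ge_sum (cyl s) (pred1 0%N) (fun=> s) 1%N.
rewrite big_mkcond big_ord1 /=; apply=> [i j /= /eqP-> /eqP-> //|_ _ //].
Qed.

Lemma mu_set0 : mu R set0 = 0%E.
Proof.
apply/le_anti; rewrite mu_ge0 andbT.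
apply: (@mu_le_cover _ (fun=> false) xpred0 (fun=> [::])) => // N.
by rewrite big_pred0.
Qed.

End outer_measure.

Section density.
Variable R : realType.

Lemma density_is1_cyl (A : set cantor_space) z s :
  cyl s z -> cyl s `<=` A -> density_is (R:=R) A z 1.
Proof.
move=> zs sA; apply: cvg_near_cst; exists (size s) => // n /= sn.
rewrite setIidr; last by apply: subset_trans sA; exact: cyl_prefix_sub.
by rewrite mu_cyl size_mkseq -EFinM mulVf // expf_neq0 // pnatr_eq0.
Qed.

Lemma density_is0_eventually (A : set cantor_space) z n0 :
  (forall n, (n0 <= n)%N -> A `&` cyl (Defs.prefix z n) = set0) ->
  density_is (R:=R) A z 0.
Proof.
move=> Az; apply: cvg_near_cst; exists n0 => // n /= n0n.
by rewrite Az // mu_set0 mul0e.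
Qed.

End density.

Section binary_expansion.
Context {R : realType} (r : R).

Fixpoint bin_rem (j : nat) : R :=
  if j is j'.+1 then
    (if 1 <= 2 * bin_rem j' then 2 * bin_rem j' - 1 else 2 * bin_rem j')
  else r.

Definition bin_digit (j : nat) : bool := 1 <= 2 * bin_rem j.

Lemma bin_expansion N :
  r = \sum_(j < N | bin_digit j) 2 ^- j.+1 + bin_rem N / 2 ^+ N.
Proof.
elim: N => [|N IH]; first by rewrite big_ord0 expr0 divr1 add0r.
rewrite (@big_ord_recr_cond _ 0 _ N bin_digit (fun j => 2 ^- j.+1)) /=.
rewrite /bin_digit exprS invfM.
by case: ifP => _; rewrite {1}IH; field.
Qed.

Hypothesis r01 : 0 <= r < 1.

Lemma bin_rem_ge0_lt1 j : 0 <= bin_rem j < 1.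
Proof.
move: r01 => /andP[r0 r1].
elim: j => [|j /andP[h0 h1]] /=; first by rewrite r0 r1.
by case: ifP => h; apply/andP; split; lra.
Qed.

Lemma bin_sum_le N : \sum_(j < N | bin_digit j) 2 ^- j.+1 <= r.
Proof.
have /andP[rem0 _] := bin_rem_ge0_lt1 N.
by rewrite [X in _ <= X](bin_expansion N) lerDl divr_ge0 ?exprn_ge0.
Qed.

Lemma bin_sum_gt N : r - 2 ^- N < \sum_(j < N | bin_digit j) 2 ^- j.+1.
Proof.
have /andP[_ rem1] := bin_rem_ge0_lt1 N.
rewrite {1}(bin_expansion N) ltrBlDr ltrD2l ltr_pdivrMr ?exprn_gt0 //.
by rewrite mulVf ?expf_neq0 ?pnatr_eq0.
Qed.

Lemma bin_digit_false : exists L, bin_digit L = false.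
Proof.
apply: contrapT => no_zero.
have digit1 j : bin_digit j.
  by apply/negPn/negP => /negbTE dj; apply: no_zero; exists j.
move: r01 => /andP[_ r1]; have [N hN] := @exp2V_lt R (1 - r) ltac:(lra).
have := bin_sum_le N; rewrite big_mkcond.
rewrite (eq_bigr (fun j : 'I_N => 2 ^- (j + 0).+1)) => [|j _]; last first.
  by rewrite digit1 addn0.
rewrite sum_exp2V addn0 expr0 invr1; lra.
Qed.

End binary_expansion.

Section branches.
Context {R : realType}.
Variables (e : nat -> bool) (L : nat).

Definition apex : cantor_space := fun i => (i < L)%N && e i.

(* Branch [j] follows [apex] up to position [fork j], where it leaves it.
   For j > L the two branches forking at the same position are told apart
   by their next bit. *)
Definition fork (j : nat) : nat := if (j < L)%N then j else L + (j - L.+1)./2.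

Definition branch_bit (j i : nat) : bool :=
  if (i < fork j)%N then apex i
  else if i == fork j then ~~ apex i
  else (i == (fork j).+1) && odd (j - L).

Definition branch (j : nat) : seq bool := mkseq (branch_bit j) j.+1.

Definition branches : set cantor_space :=
  \bigcup_(j in [set j | e j]) cyl (branch j).

Lemma fork_le j : (fork j <= j)%N.
Proof. by rewrite /fork; case: (ltnP j L); lia. Qed.

Lemma size_branch j : size (branch j) = j.+1.
Proof. exact: size_mkseq. Qed.

Lemma nth_branch j i : (i <= j)%N -> nth false (branch j) i = branch_bit j i.
Proof. by move=> ij; rewrite nth_mkseq. Qed.

Lemma cyl_branch j :
  cyl (branch j) = [set x | forall i, (i <= j)%N -> x i = branch_bit j i].
Proof. exact: cyl_mkseq. Qed.

Lemma branch_bit_apex j i : (i < fork j)%N -> branch_bit j i = apex i.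
Proof. by rewrite /branch_bit => ->. Qed.

Lemma branch_bit_fork j : branch_bit j (fork j) = ~~ apex (fork j).
Proof. by rewrite /branch_bit ltnn eqxx. Qed.

Lemma branch_bit_next j : branch_bit j (fork j).+1 = odd (j - L).
Proof. by rewrite /branch_bit ltnNge leqnSn (gtn_eqF (ltnSn _)) eqxx. Qed.

Lemma open_branches : open branches.
Proof. by apply: bigcup_open => j _; exact: (cyl_clopen _).1. Qed.

Lemma branch_prefix_apex_disjoint j n :
  (fork j < n)%N -> cyl (branch j) `&` cyl (Defs.prefix apex n) = set0.
Proof.
move=> fn; apply: (@cyl_disjoint _ _ (fork j)).
- by rewrite size_branch ltnS fork_le.
- by rewrite size_mkseq.
- by rewrite nth_branch ?fork_le // nth_mkseq // branch_bit_fork; case: apex.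
Qed.

Lemma fork_gt m j : (L + m.*2 + 3 <= j)%N -> (m < fork j)%N.
Proof. by rewrite /fork; case: (ltnP j L); lia. Qed.

Lemma branches_separated x : ~ branches x -> x <> apex ->
  exists n0, forall n, (n0 <= n)%N ->
    cyl (Defs.prefix x n) `&` (branches `|` [set apex]) = set0.
Proof.
move=> nUx xapex.
have /existsNP [m /eqP xm] : ~ forall m, x m = apex m.
  by move=> xa; apply: xapex; apply/funext.
exists (L + m.*2 + 3)%N => n mn; apply/seteqP; split => // y.
rewrite /Defs.prefix cyl_mkseq => -[yx [[j ej]|yapex]]; last first.
  by move: xm; rewrite -yx -?yapex ?eqxx //; lia.
rewrite cyl_branch => yj; have [jm|jm] := leqP (L + m.*2 + 3) j.
  move: xm; rewrite -yx; last lia.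
  by rewrite yj ?branch_bit_apex ?eqxx ?fork_gt //; lia.
apply: nUx; exists j; rewrite // cyl_branch => i ij.
by rewrite -yx ?yj //; lia.
Qed.

Lemma closure_branches : closure branches `<=` branches `|` [set apex].
Proof.
move=> x clx; have [Ux|nUx] := pselect (branches x); first by left.
have [->|xapex] := pselect (x = apex); first by right.
have [n0 sep] := branches_separated _ nUx xapex.
have [|y [Uy xy]] := clx (cyl (Defs.prefix x n0)).
  apply: open_nbhs_nbhs; split; first exact: (cyl_clopen _).1.
  exact: cyl_prefix.
have : (cyl (Defs.prefix x n0) `&` (branches `|` [set apex])) y.
  by split => //; left.
by rewrite sep.
Qed.

Hypothesis eL : e L = false.

(* Two branches differ at the smaller of their forks, or, when they fork at
   the same position, at the next bit. *)
Lemma branches_trivIset : trivIset [set j | e j] (cyl \o branch).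
Proof.
apply/trivIsetP => i j ei ej.
wlog ij : i j ei ej / (i < j)%N.
  move=> wlog; rewrite neq_ltn => /orP[ij|ji].
    by apply: wlog; rewrite // ltn_eqF.
  by rewrite setIC; apply: wlog; rewrite // ltn_eqF.
have iL : i != L by apply: contraTneq ei => ->; rewrite eL.
have jL : j != L by apply: contraTneq ej => ->; rewrite eL.
move=> _ /=; have fi := fork_le i; have fj := fork_le j.
have [fij|fji] := ltnP (fork i) (fork j).
  apply: (@cyl_disjoint _ _ (fork i)); rewrite ?size_branch; try lia.
  rewrite nth_branch // nth_branch; last lia.
  by rewrite branch_bit_fork branch_bit_apex //; case: (apex _).
have [Li fij] : (L < i)%N /\ fork i = fork j.
  by move: fji; rewrite /fork; case: (ltnP i L); case: (ltnP j L); lia.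
have fi_lt : (fork i < i)%N by rewrite /fork; case: (ltnP i L); lia.
apply: (@cyl_disjoint _ _ (fork i).+1); rewrite ?size_branch; try lia.
rewrite !nth_branch; try lia.
rewrite [in X in _ != X]fij !branch_bit_next.
by move: fij; rewrite /fork; case: (ltnP i L); case: (ltnP j L); lia.
Qed.

Lemma fork_lt_prefix j n :
  e j -> (L <= n)%N -> (j <= n.*2 - L)%N -> (fork j < n)%N.
Proof.
move=> ej; have jL : j != L by apply: contraTneq ej => ->; rewrite eL.
by rewrite /fork; case: (ltnP j L); lia.
Qed.

(* A branch meeting N_{apex|n} forks at depth at least n, so its index is
   at least 2n - L + 1. *)
Lemma mu_prefix_apex A n : A `<=` branches `|` [set apex] -> (L <= n)%N ->
  (mu R (A `&` cyl (Defs.prefix apex n)) <= (2 ^- (n.*2 - L).+1)%:E)%E.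
Proof.
set J := (n.*2 - L).+1 => AU Ln.
apply: (@mu_le_cover _ _ apex xpredT (fun m => branch (m + J))).
  move=> y [/AU [[j ej yj]|->] yn]; [right|by left].
  have Jj : (J <= j)%N.
    rewrite leqNgt ltnS; apply/negP => jJ.
    have : (cyl (branch j) `&` cyl (Defs.prefix apex n)) y by [].
    by rewrite branch_prefix_apex_disjoint // fork_lt_prefix.
  by exists (j - J)%N => //=; rewrite subnK.
move=> N; under eq_bigr do rewrite size_branch.
by rewrite sum_exp2V gerBl invr_ge0 exprn_ge0.
Qed.

Lemma density_is0_apex A : A `<=` branches `|` [set apex] ->
  density_is (R:=R) A apex 0.
Proof.
move=> AU.
apply: (@squeeze_cvge _ _ _ _ (cst 0%E) _ (fun n => (2 ^+ L * 2^-1 ^+ n)%:E)).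
- exists L => // n /= Ln; rewrite mule_ge0 ?mu_ge0 ?lee_fin ?exprn_ge0 //=.
  have h2n : (0 <= (2 ^+ n)%:E :> \bar R)%E by rewrite lee_fin exprn_ge0.
  apply: le_trans (lee_wpmul2r h2n (mu_prefix_apex _ _ AU Ln)) _.
  rewrite -EFinM lee_fin mulrC exprVn; apply: exp2_ratio_le; lia.
- exact: cvg_cst.
- apply: cvg_EFin; first exact: nearW.
  rewrite -(mulr0 (2 ^+ L)); apply: cvgMl_tmp; apply: cvg_expr.
  by rewrite ger0_norm ?invr_ge0 // invf_lt1 // ltr1n.
Qed.

Lemma dualistic_branches A :
  branches `<=` A -> A `<=` branches `|` [set apex] -> dualistic R A.
Proof.
move=> UA AU z; have [[j ej zj]|nUz] := pselect (branches z).
  exists 1; split; first by right.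
  by apply: (@density_is1_cyl R _ _ _ zj) => y yj; apply: UA; exists j.
have [->|zapex] := pselect (z = apex).
  by exists 0; split; [left | exact: density_is0_apex].
have [n0 sep] := branches_separated _ nUz zapex.
exists 0; split; first by left.
apply: (@density_is0_eventually _ _ _ n0) => n n0n.
apply/seteqP; split => // y [Ay zy].
have : (cyl (Defs.prefix z n) `&` (branches `|` [set apex])) y.
  by split => //; exact: AU.
by rewrite sep.
Qed.

Lemma mu_branches_ge A N : branches `<=` A ->
  ((\sum_(j < N | e j) 2 ^- j.+1)%:E <= mu R A)%E.
Proof.
move=> UA; have := @mu_ge_sum R A e branch N branches_trivIset.
under eq_bigr do rewrite size_branch.
by apply=> j ej x xj; apply: UA; exists j.
Qed.

Lemma mu_branches_le A (x : R) : A `<=` branches `|` [set apex] ->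
  (forall N, \sum_(j < N | e j) 2 ^- j.+1 <= x) -> (mu R A <= x%:E)%E.
Proof.
move=> AU sx.
apply: (@mu_le_cover _ _ apex e branch) => [y /AU [[j ej yj]|->]|N].
- by right; exists j.
- by left.
- by under eq_bigr do rewrite size_branch.
Qed.

End branches.

Lemma mu_branches_bin {R : realType} (r : R) L A :
  0 <= r < 1 -> bin_digit r L = false ->
  branches (bin_digit r) L `<=` A ->
  A `<=` branches (bin_digit r) L `|` [set apex (bin_digit r) L] ->
  mu R A = r%:E.
Proof.
move=> r01 eL UA AU; apply/le_anti/andP; split.
  by apply: mu_branches_le AU _ => N; exact: bin_sum_le.
apply/lee_addgt0Pr => eps eps0; have [N Neps] := exp2V_lt _ eps0.
apply: le_trans (leeD2r _ (mu_branches_ge _ _ eL A N UA)).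
by rewrite -EFinD lee_fin; have := bin_sum_gt _ r01 N; lra.
Qed.

Theorem proposition3p9 (R : realType) (r : R) :
  0 < r -> r < 1 ->
  exists U : set cantor_space,
    [/\ open U, dualistic R U, mu R U = r%:E, mu R (closure U) = r%:E
      & dualistic R (closure U)].
Proof.
move=> r0 r1; have r01 : 0 <= r < 1 by rewrite ltW.
have [L eL] := bin_digit_false _ r01.
set e := bin_digit r in eL *.
have UclU := @subset_closure _ (branches e L).
have clU := closure_branches e L.
have UU : branches e L `<=` branches e L `|` [set apex e L].
  by move=> x Ux; left.
exists (branches e L); split.
- exact: open_branches.
- exact: (dualistic_branches e L).
- exact: (mu_branches_bin r L).
- exact: (mu_branches_bin r L).
- exact: (dualistic_branches e L).
Qed.
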